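(* Let $\mathcal{C}$ be a clutter and let $A$ be the $n\times s$ matrix with columns $v_1,\ldots,v_s$. If $f=t^{a^+}-t^{a^-}$ is a nonzero homogeneous binomial in $I(X)$ with $\deg(f)\leq q-2$, where $a\in\mathbb{Z}^s$ and $a^+,a^-\in\mathbb{N}^s$ are its positive and negative parts ($a=a^+-a^-$ with disjoint supports), then $f\in I_\mathcal{A}$, i.e. $Aa^+=Aa^-$.
   Context: Let $K=\mathbb{F}_q$ be a finite field with $q\neq 2$ elements. A clutter $\mathcal{C}$ with vertex set $\{y_1,\ldots,y_n\}$ is a family of subsets (edges) of this set such that no edge is contained in another; let its edges be $f_1,\ldots,f_s$ ($s\geq 2$) with characteristic vectors $v_i=\sum_{y_j\in f_i}e_j\in\{0,1\}^n$, and $\mathcal{A}=\{v_1,\ldots,v_s\}$. For $x\in K^n$ write $x^{v_i}=\prod_j x_j^{v_{ij}}$. Let $X=\{[(x^{v_1},\ldots,x^{v_s})]\in\mathbb{P}^{s-1}: x\in (K^* )^n\}$, let $S=K[t_1,\ldots,t_s]$ with the standard grading, and let $I(X)$ be the ideal of $S$ generated by the homogeneous polynomials vanishing on $X$. The toric ideal is $I_\mathcal{A}=(t^a-t^b: a,b\in\mathbb{N}^s,\ \sum_i a_iv_i=\sum_i b_iv_i)\subset S$. *)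

From HB Require Import structures.
From mathcomp Require Import all_boot all_order all_algebra.
Set Implicit Arguments. Unset Strict Implicit. Unset Printing Implicit Defensive.
Import GRing.Theory.
Local Open Scope ring_scope.

Definition is_clutter (n s : nat) (E : 'I_s -> {set 'I_n}) : Prop :=
  forall i j : 'I_s, i != j -> ~~ (E i \subset E j).

Definition charvec (n s : nat) (E : 'I_s -> {set 'I_n}) (i : 'I_s) (j : 'I_n) : nat :=
  (j \in E i).

Definition xpow (K : fieldType) (n : nat) (x : 'I_n -> K) (v : 'I_n -> nat) : K :=
  \prod_(j < n) x j ^+ v j.

Definition param_point (K : fieldType) (n s : nat) (E : 'I_s -> {set 'I_n})
  (x : 'I_n -> K) : 'I_s -> K :=
  fun i => xpow x (charvec E i).

Definition monom_eval (K : fieldType) (s : nat) (y : 'I_s -> K) (a : 'I_s -> nat) : K :=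
  \prod_(i < s) y i ^+ a i.

(* the homogeneous binomial t^ap - t^am lies in I(X), i.e. vanishes at every
   point of X (every representative (x^{v_1},...,x^{v_s}), x in (K^* )^n). *)
Definition binom_in_IX (K : fieldType) (n s : nat) (E : 'I_s -> {set 'I_n})
  (ap am : 'I_s -> nat) : Prop :=
  forall x : 'I_n -> K, (forall j, x j != 0) ->
    monom_eval (param_point E x) ap - monom_eval (param_point E x) am = 0.

From HB Require Import structures.
From mathcomp Require Import all_boot all_order all_algebra.
From mathcomp Require Import zify.
Local Open Scope ring_scope.
Import GRing.Theory.

(* Fix a vertex y_j and a nonzero scalar l, and evaluate the
   binomial at the point x of the torus with x_j = l and x_k = 1 for k <> j.
   Then x^{v_i} = l^{v_ij}, so t^a evaluates to l^{(A a)_j}, and f in I(X)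
   gives l^{(A a^+)_j} = l^{(A a^-)_j} for every l in K^*.  Both exponents
   are bounded by deg f <= q - 2, and two exponents e <= e' < q - 1 that
   agree as power functions on K^* must be equal: otherwise every element of
   K^* would be a root of t^{e'-e} - 1, which has at most e'-e < q - 1 roots. *)

(* Every nonzero element of a finite field is a k-th root of unity only if
   k = 0 or k >= |K| - 1, since t^k - 1 has at most k roots. *)
Lemma all_unity_roots_card {K : finFieldType} {k : nat} :
  (0 < k)%N -> (forall l : K, l != 0 -> l ^+ k = 1) -> (#|K|.-1 <= k)%N.
Proof.
move=> k_gt0 unity.
have roots_nz : all k.-unity_root (enum (predC1 (0 : K))).
  by apply/allP => l; rewrite mem_enum /= => l_nz; rewrite unity_rootE unity.
have := max_unity_roots k_gt0 roots_nz (enum_uniq _).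
by rewrite -cardE cardC1.
Qed.

Lemma expf_nz_inj {K : finFieldType} {a b : nat} :
  (a < #|K|.-1)%N -> (b < #|K|.-1)%N ->
  (forall l : K, l != 0 -> l ^+ a = l ^+ b) -> a = b.
Proof.
wlog ab : a b / (a <= b)%N => [hwlog|] ha hb eq_pow.
  case: (leqP a b) => [ab|/ltnW ba]; first exact: hwlog.
  by apply/esym/hwlog => // l l_nz; rewrite eq_pow.
have unity (l : K) : l != 0 -> l ^+ (b - a) = 1.
  move=> l_nz; apply: (mulfI (expf_neq0 a l_nz)).
  by rewrite -exprD subnKC // mulr1 eq_pow.
case: (posnP (b - a)) => [/eqP|d_gt0]; first by rewrite subn_eq0; lia.
by have := all_unity_roots_card d_gt0 unity; lia.
Qed.

Definition vertex_point {K : fieldType} {n : nat} (j : 'I_n) (l : K) : 'I_n -> K :=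
  fun k => if k == j then l else 1.

(* (A a)_j, the j-th entry of A a, where A has the vectors v_i as columns. *)
Definition incidence_image {n s : nat} (E : 'I_s -> {set 'I_n})
  (a : 'I_s -> nat) (j : 'I_n) : nat :=
  \sum_(i < s) charvec E i j * a i.

Lemma monom_eval_vertex_point {K : fieldType} {n s : nat}
  (E : 'I_s -> {set 'I_n}) (a : 'I_s -> nat) (j : 'I_n) (l : K) :
  monom_eval (param_point E (vertex_point j l)) a = l ^+ incidence_image E a j.
Proof.
have edge i : param_point E (vertex_point j l) i = l ^+ charvec E i j.
  rewrite /param_point /xpow (bigD1 j) //= big1 ?mulr1 /vertex_point ?eqxx //.
  by move=> k /negbTE ->; rewrite expr1n.
rewrite /monom_eval /incidence_image -prodrXr.
by apply: eq_bigr => i _; rewrite edge -exprM.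
Qed.

Lemma incidence_image_le_deg {n s : nat} (E : 'I_s -> {set 'I_n})
  (a : 'I_s -> nat) (j : 'I_n) :
  (incidence_image E a j <= \sum_(i < s) a i)%N.
Proof.
apply: leq_sum => i _; rewrite /charvec.
by case: (j \in E i); rewrite ?mul1n ?mul0n.
Qed.

Theorem proposition4p2 (K : finFieldType) (q n s : nat)
  (E : 'I_s -> {set 'I_n}) (ap am : 'I_s -> nat) :
  #|K| = q -> q != 2%N ->
  (2 <= s)%N ->
  is_clutter E ->
  (* a^+ and a^- have disjoint supports *)
  (forall i, ap i = 0%N \/ am i = 0%N) ->
  (* f = t^{a^+} - t^{a^-} is nonzero *)
  ap <> am ->
  (* f is homogeneous *)
  (\sum_(i < s) ap i = \sum_(i < s) am i)%N ->
  (* deg f <= q - 2 *)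
  (\sum_(i < s) ap i <= q - 2)%N ->
  binom_in_IX K E ap am ->
  (* A a^+ = A a^- *)
  forall j : 'I_n,
    (\sum_(i < s) charvec E i j * ap i = \sum_(i < s) charvec E i j * am i)%N.
Proof.
move=> Kq _ _ _ _ _ hom deg f_IX j.
have K_gt1 : (1 < #|K|)%N by rewrite (cardD1 0) (cardD1 1) !inE oner_neq0.
have small (a : 'I_s -> nat) :
    (\sum_(i < s) a i <= q - 2)%N -> (incidence_image E a j < #|K|.-1)%N.
  by move=> deg_a; have := incidence_image_le_deg E a j; lia.
apply: (expf_nz_inj (small _ deg)); first by apply: small; rewrite -hom.
move=> l l_nz; apply/eqP; rewrite -subr_eq0 -!monom_eval_vertex_point.
by apply/eqP/f_IX => k; rewrite /vertex_point; case: (k == j); rewrite ?oner_neq0.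
Qed.
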